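(* Consider the following algorithm producing an $n\times n$ $(0,1)$-matrix $P=[p_{ij}]$: start with $P=O$; choose some $i\in\{1,\ldots,n\}$ and set $p_{i1}=1$; then for $k=1,2,\ldots,n-1$: if $I^*_k(P)=\emptyset$, stop; otherwise choose some $i\in I^*_k(P)$ and set $p_{i,k+1}=1$. If the algorithm never stops early (i.e. $I^*_k(P)\ne\emptyset$ at every step), then the resulting matrix is a convex permutation matrix. Conversely, every convex $n\times n$ permutation matrix can be obtained as the output of this algorithm for a suitable sequence of choices.
   Context: A subpermutation matrix is a $(0,1)$-matrix with at most one $1$ in each row and column. A permutation matrix $P$ of the permutation $\pi$ of $\{1,\ldots,n\}$ (with $1$'s in positions $(i,\pi_i)$) is convex if $\pi_2-\pi_1\le\pi_3-\pi_2\le\cdots\le\pi_n-\pi_{n-1}$. For a subpermutation matrix $P$, $I_k(P)$ is the set of rows containing a $1$ in one of the first $k$ columns. For $k\le n$, an $n\times n$ subpermutation matrix $P$ is $k$-convex if (i) each of its first $k$ columns contains exactly one $1$, (ii) $I_k(P)$ is an interval $\{r,r+1,\ldots,s\}$ of consecutive integers, and (iii) $\pi_{i+1}-\pi_i\le\pi_{i+2}-\pi_{i+1}$ for $i=r,\ldots,s-2$, where $\pi_i$ denotes the column of the unique $1$ in row $i$. For a $k$-convex subpermutation matrix $P$ whose columns $k+1,\ldots,n$ are zero, with $I_k(P)=\{r,\ldots,s\}$, the set $I^*_k(P)\subseteq\{r-1,s+1\}$ is defined by: $r-1\in I^*_k(P)$ iff $r>1$ and the matrix obtained from $P$ by putting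 a $1$ in position $(r-1,k+1)$ is $(k+1)$-convex; $s+1\in I^*_k(P)$ iff $s<n$ and the matrix obtained from $P$ by putting a $1$ in position $(s+1,k+1)$ is $(k+1)$-convex. *)

(* Matrices are n x n boolean matrices 'M[bool]_n, indices
   are 0-based ('I_n); row/column i here is row/column i+1 of the paper. *)
From mathcomp Require Import all_boot all_order all_fingroup all_algebra.
Set Implicit Arguments. Unset Strict Implicit. Unset Printing Implicit Defensive.

Section Defs.
Variable n : nat.
Implicit Types (P : 'M[bool]_n).

Definition subperm P : Prop :=
  (forall (i : 'I_n) (j j' : 'I_n), P i j -> P i j' -> j = j') /\
  (forall (j : 'I_n) (i i' : 'I_n), P i j -> P i' j -> i = i').

Definition Iset (k : nat) P : {set 'I_n} :=
  [set i | [exists j : 'I_n, (j < k) && P i j]].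

(* Condition (iii) is stated via the columns j0, j1, j2 of the 1's in rows
   i, i+1, i+2 (unique, since P is a subpermutation matrix). *)
Definition kconvex (k : nat) P : Prop :=
  subperm P /\ k <= n /\
  (forall j : 'I_n, j < k -> #|[set i | P i j]| = 1) /\
  exists r s : nat, r <= s /\
    (forall i : 'I_n, (i \in Iset k P) = (r <= i <= s)) /\
    (forall (i0 i1 i2 j0 j1 j2 : 'I_n),
        r <= i0 -> i1 = i0.+1 :> nat -> i2 = i0.+2 :> nat -> i2 <= s ->
        P i0 j0 -> P i1 j1 -> P i2 j2 ->
        (j1%:Z - j0%:Z <= j2%:Z - j1%:Z)%R).

Definition setone P (i j : 'I_n) : 'M[bool]_n :=
  \matrix_(a, b) (P a b || ((a == i) && (b == j))).

(* membership i \in I*_k(P); [k] is here the 0-based index of column k+1,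
   i.e. P is k-convex with columns k+1..n (0-based k..n-1) zero, and
   I_k(P) = {r..s}; i = r-1 (with r > 1) or i = s+1 (with s < n) and
   putting a 1 at (i, k+1) yields a (k+1)-convex matrix. *)
Definition Istar (k : 'I_n) P (i : 'I_n) : Prop :=
  kconvex k P /\
  (forall (a b : 'I_n), k <= b -> P a b = false) /\
  exists r s : nat, r <= s /\
    (forall a : 'I_n, (a \in Iset k P) = (r <= a <= s)) /\
    ((0 < r /\ i = r.-1 :> nat) \/ (s < n.-1 /\ i = s.+1 :> nat)) /\
    kconvex k.+1 (setone P i k).

(* the matrix produced after the first k steps of the algorithm when the
   1 of column b (0-based) is placed in row c b *)
Definition algmx (c : 'I_n -> 'I_n) (k : nat) : 'M[bool]_n :=
  \matrix_(a, b) ((b < k) && (c b == a)).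

(* a run of the algorithm that never stops early: every choice c k
   (k = 1..n-1, 0-based column k) lies in I*_k of the current matrix *)
Definition alg_run (c : 'I_n -> 'I_n) : Prop :=
  forall k : 'I_n, 0 < k -> Istar k (algmx c k) (c k).

Definition convex_perm_mx P : Prop :=
  exists s : 'S_n, P = (\matrix_(i, j) (s i == j))%R /\
    forall i0 i1 i2 : 'I_n, i1 = i0.+1 :> nat -> i2 = i0.+2 :> nat ->
      ((s i1)%:Z - (s i0)%:Z <= (s i2)%:Z - (s i1)%:Z)%R.
End Defs.

From mathcomp Require Import all_boot all_order all_fingroup all_algebra.
From mathcomp Require Import zify.
Set Implicit Arguments. Unset Strict Implicit. Unset Printing Implicit Defensive.
Import Order.TTheory Num.Theory.

(* If s is a convex permutation, the rows carrying the 1's of the first k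
   columns of its matrix form the sublevel set {i | s i < k}; since a convex
   sequence stays below the larger of its two end values on any interval, this
   set is an interval. Adding column k+1 enlarges it by the single row s^-1 k,
   which therefore lies just above or just below it: the choices c = s^-1 give
   a run of the algorithm. Conversely, the last step of a run certifies that
   the final matrix is n-convex, which for n columns is exactly convexity of
   the permutation it encodes. *)

Lemma exists_ascent (f : nat -> int) i j :
  i < j -> (f i < f j)%R -> exists2 m, i <= m < j & (f m < f m.+1)%R.
Proof.
elim: j => // j IH; rewrite ltnS => le_ij lt_fij.
case: (boolP ((i < j) && (f i < f j)%R)) => [/andP[lt_ij lt_fij'] | not_rise].
  have [m /andP[le_im lt_mj] asc] := IH lt_ij lt_fij'.
  by exists m; rewrite // le_im /= ltnS (ltnW lt_mj).
exists j; first by rewrite le_ij ltnSn.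
case/nandP: not_rise => [|]; [rewrite -leqNgt => le_ji | rewrite -leNgt => le_fji].
  have eq_ji : j = i by apply/eqP; rewrite eqn_leq le_ji le_ij.
  by rewrite eq_ji in lt_fij *.
exact: le_lt_trans le_fji lt_fij.
Qed.

Section ConvexSequence.
Variables (n : nat) (f : nat -> int).
Hypothesis f_convex : forall m, m.+2 < n -> (f m.+1 - f m <= f m.+2 - f m.+1)%R.

Lemma convex_seq_diff_mono m p :
  m <= p -> p.+1 < n -> (f m.+1 - f m <= f p.+1 - f p)%R.
Proof.
elim: p => [|p IH] le_mp lt_pn; first by move: le_mp; rewrite leqn0 => /eqP->.
rewrite leq_eqVlt ltnS in le_mp; case/orP: le_mp => [/eqP-> // | le_mp].
exact: le_trans (IH le_mp (ltnW lt_pn)) (f_convex lt_pn).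
Qed.

Lemma convex_seq_increasing m a b :
  (f m < f m.+1)%R -> m <= a -> a < b -> b < n -> (f a < f b)%R.
Proof.
move=> asc le_ma; elim: b => // b IH lt_ab lt_bn.
have step : (f b < f b.+1)%R.
  have := convex_seq_diff_mono (leq_trans le_ma lt_ab) lt_bn; move: asc; lia.
rewrite ltnS leq_eqVlt in lt_ab; case/orP: lt_ab => [/eqP-> // | lt_ab].
exact: lt_trans (IH lt_ab (ltnW lt_bn)) step.
Qed.

Lemma convex_seq_le_max i j l :
  i <= j <= l -> l < n -> (f j <= Num.max (f i) (f l))%R.
Proof.
move=> /andP[le_ij le_jl] lt_ln; rewrite le_max.
case: (lerP (f j) (f i)) => [// | lt_fij].
have lt_ij : i < j.
  by rewrite ltn_neqAle le_ij andbT; apply: contraTneq lt_fij => ->; rewrite ltxx.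
have [m /andP[_ lt_mj] asc] := exists_ascent lt_ij lt_fij.
rewrite leq_eqVlt in le_jl; case/orP: le_jl => [/eqP-> | lt_jl]; first by rewrite lexx orbT.
by rewrite ltW ?orbT // (convex_seq_increasing asc (ltnW lt_mj) lt_jl lt_ln).
Qed.

End ConvexSequence.

Definition ord_convex (n : nat) (A : {set 'I_n}) : Prop :=
  forall i j l : 'I_n, i <= j <= l -> i \in A -> l \in A -> j \in A.

Section OrdConvexSets.
Variables (n : nat) (A : {set 'I_n}).
Hypothesis A_convex : ord_convex A.

Lemma ord_convex_interval x0 : x0 \in A ->
  exists r s : 'I_n, [/\ r \in A, s \in A & forall i, (i \in A) = (r <= i <= s)].
Proof.
move=> Ax0.
have [r Ar r_min] := arg_minnP (fun i : 'I_n => val i) Ax0.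
have [s As s_max] := arg_maxnP (fun i : 'I_n => val i) Ax0.
exists r, s; split => // i; apply/idP/idP => [Ai | ]; first by rewrite r_min //=; exact: s_max.
by move=> ris; apply: A_convex ris Ar As.
Qed.

End OrdConvexSets.

Lemma ord_convex_setU1_adjacent (n : nat) (A : {set 'I_n}) (x r s : 'I_n) :
  x \notin A -> r \in A -> s \in A -> (forall i, (i \in A) = (r <= i <= s)) ->
  ord_convex (x |: A) ->
  (0 < r /\ x = r.-1 :> nat) \/ (s < n.-1 /\ x = s.+1 :> nat).
Proof.
move=> Ax Ar As A_def xA_convex.
have between (y a b : 'I_n) :
    a <= y <= b -> a \in x |: A -> b \in x |: A -> y != x -> r <= y <= s.
  move=> ayb aA bA yx; rewrite -A_def.
  by have := xA_convex _ _ _ ayb aA bA; rewrite !inE (negPf yx).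
have xxA : x \in x |: A by rewrite setU11.
have [rA sA] : r \in x |: A /\ s \in x |: A by rewrite !inE Ar As !orbT.
have := ltn_ord x; move: Ax; rewrite A_def => xrs lt_xn.
case: (ltnP x r) => [lt_xr | le_rx].
  left; pose y := Ordinal (leq_ltn_trans (leq_pred r) (ltn_ord r)).
  have [/(congr1 val)/= eq_yx | yx] := eqVneq y x; first by lia.
  have xyr : x <= y <= r by rewrite /=; lia.
  by have /= := between y x r xyr xxA rA yx; lia.
right; have lt_sx : s < x by move: xrs; rewrite le_rx /=; lia.
pose y := Ordinal (leq_ltn_trans lt_sx lt_xn).
have [/(congr1 val)/= eq_yx | yx] := eqVneq y x; first by lia.
have syx : s <= y <= x by rewrite /=; lia.
by have /= := between y s x syx sA xxA yx; lia.
Qed.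

Lemma setone_algmx (n : nat) (c : 'I_n -> 'I_n) (k : 'I_n) :
  setone (algmx c k) (c k) k = algmx c k.+1.
Proof.
apply/matrixP => a b; rewrite !mxE [b < k.+1]ltnS [b <= k]leq_eqVlt (inj_eq val_inj).
case: (eqVneq b k) => [-> | ne_bk]; first by rewrite ltnn /= andbT eq_sym.
by rewrite andbF orbF.
Qed.

Lemma algmx_subperm (n : nat) (c : 'I_n -> 'I_n) (k : nat) :
  injective c -> subperm (algmx c k).
Proof.
move=> c_inj; split=> [i j j' | j i i']; rewrite !mxE => /andP[_ /eqP cj] /andP[_ /eqP cj'].
  by apply: c_inj; rewrite cj cj'.
by rewrite -cj -cj'.
Qed.

Lemma algmx_col_card (n : nat) (c : 'I_n -> 'I_n) (k : nat) (j : 'I_n) :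
  j < k -> #|[set i | algmx c k i j]| = 1.
Proof.
move=> lt_jk; rewrite -(cards1 (c j)); congr #|pred_of_set _|.
by apply/setP => i; rewrite !inE mxE lt_jk eq_sym.
Qed.

Definition convex_perm (n : nat) (s : 'S_n) : Prop :=
  forall i0 i1 i2 : 'I_n, i1 = i0.+1 :> nat -> i2 = i0.+2 :> nat ->
    ((s i1)%:Z - (s i0)%:Z <= (s i2)%:Z - (s i1)%:Z)%R.

Section ConvexPermutation.
Variables (n : nat) (s : 'S_n).

Lemma algmx_perm_inv : algmx (s^-1)%g n = (\matrix_(i, j) (s i == j))%R.
Proof.
apply/matrixP => a b; rewrite !mxE ltn_ord /=.
by apply/eqP/eqP => [<- | <-]; rewrite ?permKV ?permK.
Qed.

Lemma algmx_perm_invP k (a b : 'I_n) : algmx (s^-1)%g k a b -> s a = b.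
Proof. by rewrite mxE => /andP[_ /eqP<-]; rewrite permKV. Qed.

Lemma Iset_algmx_perm_inv k : Iset k (algmx (s^-1)%g k) = [set i | s i < k].
Proof.
apply/setP => i; rewrite !inE; apply/existsP/idP => [[j /andP[_ /algmx_perm_invP->]] // | lt_sik].
by exists (s i); rewrite mxE lt_sik permK eqxx.
Qed.

Hypothesis s_convex : convex_perm s.

Let seq_of_s (m : nat) : int := (if insub m is Some i then (s i)%:Z else 0)%R.

Let seq_of_sE (i : 'I_n) : seq_of_s i = (s i)%:Z%R.
Proof. by rewrite /seq_of_s valK. Qed.

Let seq_of_s_convex m :
  m.+2 < n -> (seq_of_s m.+1 - seq_of_s m <= seq_of_s m.+2 - seq_of_s m.+1)%R.
Proof.
move=> lt_m2n; have lt_m1n := ltnW lt_m2n; have lt_mn := ltnW lt_m1n.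
have := @s_convex (Ordinal lt_mn) (Ordinal lt_m1n) (Ordinal lt_m2n) erefl erefl.
by rewrite -!seq_of_sE.
Qed.

Lemma sublevel_ord_convex k : ord_convex [set i | s i < k].
Proof.
move=> i j l ijl; rewrite !inE => lt_sik lt_slk.
have := convex_seq_le_max seq_of_s_convex ijl (ltn_ord l).
by rewrite !seq_of_sE le_max; case/orP; lia.
Qed.

Lemma sublevel_interval k : 0 < k <= n ->
  exists r t : 'I_n, [/\ r \in [set i | s i < k], t \in [set i | s i < k]
                    & forall i, (i \in [set i | s i < k]) = (r <= i <= t)].
Proof.
case/andP=> k_gt0 le_kn; pose z := Ordinal (leq_trans k_gt0 le_kn).
by apply: (ord_convex_interval (@sublevel_ord_convex k) (x0 := (s^-1)%g z)); rewrite inE permKV.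
Qed.

Lemma algmx_perm_inv_kconvex k : 0 < k <= n -> kconvex k (algmx (s^-1)%g k).
Proof.
move=> k_range; have [r [t [rA _ A_def]]] := sublevel_interval k_range.
case/andP: k_range => _ le_kn; split; first exact/algmx_subperm/perm_inj.
split=> //; split; first exact: algmx_col_card.
exists r, t; split; first by move: rA; rewrite A_def => /andP[].
split=> [i | i0 i1 i2 j0 j1 j2 _ e1 e2 _]; first by rewrite Iset_algmx_perm_inv A_def.
by move=> /algmx_perm_invP<- /algmx_perm_invP<- /algmx_perm_invP<-; exact: s_convex.
Qed.

Lemma algmx_perm_inv_Istar (k : 'I_n) :
  0 < k -> Istar k (algmx (s^-1)%g k) ((s^-1)%g k).
Proof.
move=> k_gt0; have k_range : 0 < k <= n by rewrite k_gt0 ltnW.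
split; first exact: algmx_perm_inv_kconvex.
split=> [a b le_kb | ]; first by rewrite mxE ltnNge le_kb.
have [r [t [rA tA A_def]]] := sublevel_interval k_range.
exists r, t; split; first by move: rA; rewrite A_def => /andP[].
split=> [i | ]; first by rewrite Iset_algmx_perm_inv A_def.
split; last by rewrite setone_algmx; apply: algmx_perm_inv_kconvex; rewrite ltn_ord.
apply: ord_convex_setU1_adjacent rA tA A_def _; first by rewrite inE permKV ltnn.
have -> : (s^-1)%g k |: [set i | s i < k] = [set i | s i < k.+1].
  apply/setP => i; rewrite !inE [s i < k.+1]ltnS [s i <= k]leq_eqVlt; congr orb.
  by apply/eqP/eqP => [-> | /val_inj <-]; rewrite ?permKV ?permK.
exact: sublevel_ord_convex.
Qed.

Lemma convex_perm_alg_run : alg_run (s^-1)%g.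
Proof. exact: algmx_perm_inv_Istar. Qed.

End ConvexPermutation.

Section AlgorithmOutput.
Variables (n : nat) (c : 'I_n -> 'I_n).

Lemma injective_convex_perm_mx (c_inj : injective c) :
  convex_perm (perm c_inj)^-1 -> convex_perm_mx (algmx c n).
Proof.
exists (perm c_inj)^-1%g; split=> //; rewrite -algmx_perm_inv invgK.
by apply/matrixP => a b; rewrite !mxE permE.
Qed.

Lemma kconvex_algmx_convex_perm_mx :
  kconvex n (algmx c n) -> convex_perm_mx (algmx c n).
Proof.
case=> [[row_uniq _] [_ [_ [r [t [_ [Iset_def conv]]]]]]].
have c_inj : injective c.
  by move=> j j' cjj'; apply: (row_uniq (c j)); rewrite !mxE !ltn_ord ?cjj' eqxx.
have entry i : algmx c n i ((perm c_inj)^-1%g i).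
  by rewrite mxE ltn_ord -(permE c_inj) permKV eqxx.
have in_rt (i : 'I_n) : r <= i <= t.
  by rewrite -Iset_def inE; apply/existsP; exists ((perm c_inj)^-1%g i); rewrite ltn_ord entry.
apply: (injective_convex_perm_mx (c_inj := c_inj)) => i0 i1 i2 e1 e2.
case/andP: (in_rt i0) => le_ri0 _; case/andP: (in_rt i2) => _ le_i2t.
exact: conv (entry _) (entry _) (entry _).
Qed.

Lemma alg_run_kconvex : 1 < n -> alg_run c -> kconvex n (algmx c n).
Proof.
move=> n_gt1 run; have lt_n1n : n.-1 < n by rewrite ltn_predL ltnW.
have n1_gt0 : 0 < n.-1 by lia.
have [_ [_ [_ [_ [_ [_ [_ last_step]]]]]]] := run (Ordinal lt_n1n) n1_gt0.
by move: last_step; rewrite setone_algmx /= prednK // ltnW.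
Qed.

Lemma alg_run_convex_perm_mx : alg_run c -> convex_perm_mx (algmx c n).
Proof.
case: (ltnP 1 n) => [n_gt1 run | le_n1 _].
  exact/kconvex_algmx_convex_perm_mx/alg_run_kconvex.
have c_inj : injective c.
  by move=> x y _; apply: val_inj => /=; have := ltn_ord x; have := ltn_ord y; lia.
apply: (injective_convex_perm_mx (c_inj := c_inj)) => i0 i1 i2 _ e2.
by have := ltn_ord i2; lia.
Qed.

End AlgorithmOutput.

Theorem lemma4p3 (n : nat) :
  (forall c : 'I_n -> 'I_n, alg_run c -> convex_perm_mx (algmx c n)) /\
  (forall P : 'M[bool]_n, convex_perm_mx P ->
     exists c : 'I_n -> 'I_n, alg_run c /\ algmx c n = P).
Proof.
split=> [c | P [s [-> s_convex]]]; first exact: alg_run_convex_perm_mx.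
exists (s^-1)%g; split; [exact: convex_perm_alg_run | exact: algmx_perm_inv].
Qed.
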